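(* Let $R$ be a ring. The following are equivalent: (1) $R$ is an NCUC ring; (2) every strongly nil-clean element of $R$ is uniquely clean; (3) every idempotent of $R$ is uniquely clean; (4) $R$ is abelian; (5) $R$ is an NCUNC ring.
   Context: All rings are associative with identity $1$. For a ring $R$, $\mathrm{Id}(R)$, $U(R)$, $\mathrm{Nil}(R)$ denote the sets of idempotents, units and nilpotent elements. An element $a\in R$ is uniquely clean if there is exactly one $e\in \mathrm{Id}(R)$ with $a-e\in U(R)$. An element $a$ is nil-clean if $a=e+q$ with $e\in \mathrm{Id}(R)$, $q\in\mathrm{Nil}(R)$, strongly nil-clean if moreover $eq=qe$ can be arranged, and uniquely nil-clean if there is exactly one $e\in\mathrm{Id}(R)$ with $a-e\in\mathrm{Nil}(R)$. $R$ is NCUC if every nil-clean element of $R$ is uniquely clean, and NCUNC if every nil-clean element of $R$ is uniquely nil-clean. $R$ is abelian if all its idempotents are central. *)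

From HB Require Import structures.
From mathcomp Require Import all_boot all_order all_algebra.
Set Implicit Arguments. Unset Strict Implicit. Unset Printing Implicit Defensive.
Import GRing.Theory.
Local Open Scope ring_scope.

Section Defs.
Variable R : pzRingType.

Definition idem (e : R) : Prop := e * e = e.
Definition unitP (u : R) : Prop := exists v : R, u * v = 1 /\ v * u = 1.
Definition nilp (q : R) : Prop := exists n : nat, q ^+ n = 0.

Definition uniquely_clean (a : R) : Prop := exists! e : R, idem e /\ unitP (a - e).
Definition nil_clean (a : R) : Prop := exists e q : R, [/\ idem e, nilp q & a = e + q].
Definition strongly_nil_clean (a : R) : Prop :=
  exists e q : R, [/\ idem e, nilp q, e * q = q * e & a = e + q].
Definition uniquely_nil_clean (a : R) : Prop := exists! e : R, idem e /\ nilp (a - e).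

Definition NCUC : Prop := forall a : R, nil_clean a -> uniquely_clean a.
Definition NCUNC : Prop := forall a : R, nil_clean a -> uniquely_nil_clean a.
Definition abelian_ring : Prop := forall e : R, idem e -> forall x : R, e * x = x * e.
End Defs.

(* An idempotent e is always clean through 1 - e, since e - (1 - e) = 2e - 1
   squares to 1.  A ring is abelian as soon as every corner n = e x (1 - e)
   vanishes (apply this to e and to 1 - e).  Such an n satisfies n^2 = 0,
   en = n, ne = 0, so e + n is a second idempotent with e - (e + n) nilpotent
   and e - (1 - (e + n)) = (2e - 1)(1 + n) a unit: unique cleanness or unique
   nil-cleanness of e forces n = 0.  Conversely, in an abelian ring a nil-clean
   a = e + q is clean through 1 - e, and this is the only idempotent h with
   a - h a unit: e - h = (a - h) - q is then a unit, and
   (e - h)(1 - e - h) = he - eh = 0. *)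

From mathcomp Require Import all_boot all_order all_algebra.
Local Open Scope ring_scope.
Import GRing.Theory.
Set Implicit Arguments. Unset Strict Implicit.

Section Units.
Variable R : pzRingType.
Implicit Types (a b u q : R).

Lemma nilp0 : nilp (0 : R).
Proof. by exists 1%N; rewrite expr1. Qed.

Lemma nilp_mull u q : GRing.comm u q -> nilp q -> nilp (u * q).
Proof. by move=> cuq [k hk]; exists k; rewrite exprMn_comm // hk mulr0. Qed.

Lemma nilpN q : nilp q -> nilp (- q).
Proof. by rewrite -mulN1r; apply: nilp_mull; apply: commr_sym; apply: commrN1. Qed.

Lemma unitP_mul a b : unitP a -> unitP b -> unitP (a * b).
Proof.
case=> a' [ha1 ha2] [b' [hb1 hb2]]; exists (b' * a'); split.
  by rewrite mulrA -(mulrA a) hb1 mulr1.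
by rewrite mulrA -(mulrA b') ha2 mulr1.
Qed.

Lemma unitP_1subnil q : nilp q -> unitP (1 - q).
Proof.
case=> k hk; set s := \sum_(i < k) q ^+ i.
have hs : (q - 1) * s = -1 by rewrite /s -subrX1 hk sub0r.
have cs : GRing.comm (q - 1) s.
  by apply: commr_sum => i _; apply/commrX/commr_sym/commrB; [apply: commr_refl | apply: commr1].
exists s; split; first by rewrite -opprB mulNr hs opprK.
by rewrite -opprB mulrN -cs hs opprK.
Qed.

Lemma unitP_addnil u q : GRing.comm u q -> unitP u -> nilp q -> unitP (u + q).
Proof.
move=> cuq [v [huv hvu]] hq.
have cvq : GRing.comm v q.
  rewrite /GRing.comm -[v * q]mulr1 -huv !mulrA -(mulrA v q u) -cuq.
  by rewrite mulrA hvu mul1r.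
have -> : u + q = u * (1 - - (v * q)) by rewrite opprK mulrDr mulr1 mulrA huv mul1r.
by apply: unitP_mul; [exists v | apply/unitP_1subnil/nilpN/nilp_mull].
Qed.

End Units.

Section Idempotents.
Variable R : pzRingType.
Variable e : R.
Hypothesis he : idem e.

Lemma mulr_idem_1sub : e * (1 - e) = 0.
Proof. by rewrite mulrBr mulr1 he subrr. Qed.

Lemma mulr_1sub_idem : (1 - e) * e = 0.
Proof. by rewrite mulrBl mul1r he subrr. Qed.

Lemma idem_1sub : idem (1 - e).
Proof. by rewrite /idem mulrBl mul1r mulr_idem_1sub subr0. Qed.

Lemma unitP_reflection : unitP (e - (1 - e)).
Proof.
have h : (e - (1 - e)) * (e - (1 - e)) = 1.
  rewrite mulrBl mulrBr he mulr_idem_1sub mulrBr mulr_1sub_idem idem_1sub.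
  by rewrite subr0 sub0r opprK addrC subrK.
by exists (e - (1 - e)).
Qed.

Lemma uniquely_clean_witness_idem h :
  uniquely_clean e -> idem h -> unitP (e - h) -> h = 1 - e.
Proof.
case=> g [_ U] hh hu.
by rewrite -(U _ (conj hh hu)) (U _ (conj idem_1sub unitP_reflection)).
Qed.

Lemma strongly_nil_clean_idem : strongly_nil_clean e.
Proof. by exists e, 0; split; rewrite ?mulr0 ?mul0r ?addr0 //; apply: nilp0. Qed.

Lemma nil_clean_idem : nil_clean e.
Proof. by exists e, 0; split; rewrite ?addr0 //; apply: nilp0. Qed.

Section Corner.
Variable x : R.
Let n := e * x * (1 - e).

Lemma mulr_idem_corner : e * n = n.
Proof. by rewrite /n !mulrA he. Qed.

Lemma mulr_corner_idem : n * e = 0.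
Proof. by rewrite /n -mulrA mulr_1sub_idem mulr0. Qed.

Lemma corner_sqr0 : n * n = 0.
Proof. by rewrite -{2}mulr_idem_corner mulrA mulr_corner_idem mul0r. Qed.

Lemma nilp_corner : nilp n.
Proof. by exists 2%N; rewrite expr2 corner_sqr0. Qed.

Lemma idem_add_corner : idem (e + n).
Proof.
by rewrite /idem mulrDl !mulrDr he mulr_idem_corner mulr_corner_idem corner_sqr0 !addr0.
Qed.

Lemma unitP_reflection_add_corner : unitP (e - (1 - (e + n))).
Proof.
have -> : e - (1 - (e + n)) = (e - (1 - e)) * (1 - - n).
  rewrite opprK mulrDr mulr1 mulrBl mulr_idem_corner mulrBl mul1r mulr_idem_corner.
  by rewrite subrr subr0 !opprB (addrAC e n) addrA.
by apply: unitP_mul; [apply: unitP_reflection | apply/unitP_1subnil/nilpN/nilp_corner].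
Qed.

End Corner.
End Idempotents.

Section Abelian.
Variable R : pzRingType.
Implicit Types (e h q x : R).

Lemma abelian_of_corner0 :
  (forall e x, idem e -> e * x * (1 - e) = 0) -> abelian_ring R.
Proof.
move=> H e he x.
have := H e x he; rewrite mulrBr mulr1 => /eqP; rewrite subr_eq0 => /eqP ->.
have := H (1 - e) x (idem_1sub he); rewrite subKr.
by rewrite mulrBl mul1r mulrBl => /eqP; rewrite subr_eq0 => /eqP ->.
Qed.

Lemma abelian_of_idem_uniquely_clean :
  (forall e, idem e -> uniquely_clean e) -> abelian_ring R.
Proof.
move=> H; apply: abelian_of_corner0 => e x he.
have := uniquely_clean_witness_idem he (H e he) (idem_1sub (idem_add_corner he x))
  (unitP_reflection_add_corner he x).
by move/(congr1 (fun t => 1 - t - e)); rewrite !subKr addrAC !subrr add0r.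
Qed.

Lemma abelian_of_NCUNC : NCUNC R -> abelian_ring R.
Proof.
move=> H; apply: abelian_of_corner0 => e x he; set n := e * x * (1 - e).
have [g [_ U]] := H e (nil_clean_idem he).
have ge : g = e by apply/U; split; rewrite // subrr; apply: nilp0.
have gen : g = e + n.
  apply/U; split; first exact: idem_add_corner.
  by rewrite opprD addrA subrr sub0r; apply/nilpN/nilp_corner.
by apply/(addrI e); rewrite addr0 -gen ge.
Qed.

Hypothesis abR : abelian_ring R.

Lemma abelian_comm_reflection e x : idem e -> GRing.comm (e - (1 - e)) x.
Proof.
by move=> he; apply/commr_sym/commrB; [|apply: commrB; [apply: commr1|]]; apply/commr_sym/abR.
Qed.

Lemma abelian_clean_idem e q h :
  idem e -> nilp q -> idem h -> unitP (e + q - h) -> h = 1 - e.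
Proof.
move=> he hq hh hu.
have [w [_ hw]] : unitP (e - h).
  have -> : e - h = (e + q - h) + - q by rewrite addrAC addrK.
  apply: unitP_addnil (nilpN hq) => //; apply/commrN/commr_sym/commrB.
    by apply: commrD; [apply/commr_sym/abR | apply: commr_refl].
  exact/commr_sym/abR.
have hz : (e - h) * (1 - e - h) = 0.
  rewrite mulrBl !mulrBr !mulr1 he hh (abR hh e).
  by rewrite subrr sub0r opprB subKr addNr.
have := congr1 (GRing.mul w) hz.
by rewrite mulrA hw mul1r mulr0 => /eqP; rewrite subr_eq0 => /eqP ->.
Qed.

Lemma NCUC_of_abelian : NCUC R.
Proof.
move=> a [e [q [he hq ->]]]; exists (1 - e); split.
  split; first exact: idem_1sub.
  rewrite addrAC; apply: unitP_addnil hq; last exact: unitP_reflection.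
  exact: abelian_comm_reflection.
by move=> h [hh hu]; rewrite (abelian_clean_idem he hq hh hu).
Qed.

Lemma NCUNC_of_abelian : NCUNC R.
Proof.
move=> a [e [q [he hq ->]]]; exists e; split; first by split; rewrite // (addrC e q) addrK.
move=> g [hg hn].
have hu : unitP (e + q - (1 - g)).
  rewrite -[e + q](subrK g) -addrA addrC.
  by apply: unitP_addnil hn; [apply: abelian_comm_reflection | apply: unitP_reflection].
by have /(congr1 (fun t => 1 - t)) := abelian_clean_idem he hq (idem_1sub hg) hu; rewrite !subKr.
Qed.

End Abelian.

Theorem theorem3p5 (R : pzRingType) :
  [<-> NCUC R;
       (forall a : R, strongly_nil_clean a -> uniquely_clean a);
       (forall e : R, idem e -> uniquely_clean e);
       abelian_ring R;
       NCUNC R].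
Proof.
tfae.
- by move=> H a [e [q [he hq _ ->]]]; apply: H; exists e, q.
- by move=> H e he; apply/H/strongly_nil_clean_idem.
- exact: abelian_of_idem_uniquely_clean.
- exact: NCUNC_of_abelian.
- by move=> /abelian_of_NCUNC /NCUC_of_abelian.
Qed.
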